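(* Let $0<\varepsilon\le 1$, let $A>0$, and let $x_1,\dots,x_k>0$ be item sizes with $\sum_{i=1}^k x_i\le A$ and $k\ge\lceil 1/\varepsilon^2\rceil$. Let $A'$ be the largest number of the form $(1+\varepsilon)^z$, $z\in\mathbb{Z}$, with $A'\le A$. Remove items one at a time in order of non-increasing size (largest first) until the total size of the remaining items is at most $A'$. Then at least $(1-2\varepsilon)k$ items remain. *)

From Stdlib Require Export Reals List Sorted Permutation ZArith.
Export ListNotations.
Open Scope R_scope.

Definition lsum (l : list R) : R := fold_right Rplus 0 l.

(* ceiling of a real: ceil x = - floor (- x), with floor y = up y - 1 *)
Definition Rceil (x : R) : Z := (- (up (- x) - 1))%Z.

Definition largest_pow_below (eps A A' : R) : Prop :=
  (exists z : Z, A' = powerRZ (1 + eps) z) /\ A' <= A /\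
  (forall z : Z, powerRZ (1 + eps) z <= A -> powerRZ (1 + eps) z <= A').

Definition nonincreasing (s : list R) : Prop := Sorted Rge s.

(* j is the number of items removed by the process: removing the first j items
   of s (largest first) is the first time the remaining total is <= A' *)
Definition removal_count (s : list R) (A' : R) (j : nat) : Prop :=
  lsum (skipn j s) <= A' /\ (forall m : nat, (m < j)%nat -> lsum (skipn m s) > A').

(* Removing the m largest items, m + 1 being the number of removals, still
   leaves more than A' >= A / (1 + eps) behind, so these m items weigh less
   than an eps / (1 + eps) < eps fraction of the total; being the largest,
   they are at least an m / k fraction of it, hence m < eps k.  Finally
   k eps^2 >= 1 gives m + 1 < eps k + eps^2 k <= 2 eps k. *)

From Stdlib Require Import Reals List Sorted Permutation ZArith.
From Stdlib Require Import Lra Lia Psatz.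
Open Scope R_scope.

Lemma Rceil_ge (r : R) : r <= IZR (Rceil r).
Proof.
  unfold Rceil; rewrite opp_IZR, minus_IZR.
  destruct (archimed (- r)) as [_ Hup]; lra.
Qed.

Lemma largest_pow_below_pos (eps A A' : R) :
  0 < eps -> largest_pow_below eps A A' -> 0 < A'.
Proof.
  intros Heps [[z ->] _]; apply powerRZ_lt; lra.
Qed.

Lemma largest_pow_below_gt (eps A A' : R) :
  0 < eps -> largest_pow_below eps A A' -> A < A' * (1 + eps).
Proof.
  intros Heps HA'; pose proof (largest_pow_below_pos _ _ _ Heps HA') as Hpos.
  destruct HA' as [[z Hz] [_ Hmax]].
  assert (Hnext : powerRZ (1 + eps) (z + 1) = A' * (1 + eps)).
  { rewrite powerRZ_add by lra; rewrite <- Hz; simpl; lra. }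
  destruct (Rlt_or_le A (A' * (1 + eps))) as [Hlt | Hle]; [exact Hlt |].
  rewrite <- Hnext in Hle; apply Hmax in Hle; rewrite Hnext in Hle; nra.
Qed.

Lemma lsum_app (l1 l2 : list R) : lsum (l1 ++ l2) = lsum l1 + lsum l2.
Proof. induction l1 as [| a l IH]; simpl; [lra | unfold lsum in *; rewrite IH; lra]. Qed.

Lemma lsum_firstn_skipn (m : nat) (l : list R) :
  lsum l = lsum (firstn m l) + lsum (skipn m l).
Proof. rewrite <- lsum_app, firstn_skipn; reflexivity. Qed.

Lemma lsum_Permutation (l1 l2 : list R) : Permutation l1 l2 -> lsum l1 = lsum l2.
Proof. induction 1; unfold lsum in *; simpl in *; lra. Qed.

Lemma lsum_nonneg (l : list R) : Forall (fun y => 0 <= y) l -> 0 <= lsum l.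
Proof. induction 1; unfold lsum in *; simpl in *; lra. Qed.

Lemma lsum_le_length_mul (l : list R) (c : R) :
  (forall y, In y l -> y <= c) -> lsum l <= INR (length l) * c.
Proof.
  induction l as [| a l IH]; intros Hc; [simpl; lra |].
  change (length (a :: l)) with (S (length l)); rewrite S_INR.
  assert (a <= c) by (apply Hc; left; reflexivity).
  assert (lsum l <= INR (length l) * c) by (apply IH; intros y Hy; apply Hc; right; exact Hy).
  unfold lsum in *; simpl; lra.
Qed.

Lemma lsum_dominated_average (l1 l2 : list R) :
  (forall a b, In a l1 -> In b l2 -> b <= a) ->
  INR (length l1) * lsum l2 <= INR (length l2) * lsum l1.
Proof.
  induction l1 as [| a l1 IH]; intros Hdom.
  - unfold lsum; simpl; lra.
  - change (length (a :: l1)) with (S (length l1)); rewrite S_INR.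
    assert (Ha : lsum l2 <= INR (length l2) * a)
      by (apply lsum_le_length_mul; intros b Hb; apply Hdom; [left |]; auto).
    assert (IH' : INR (length l1) * lsum l2 <= INR (length l2) * lsum l1)
      by (apply IH; intros a' b Ha' Hb; apply Hdom; [right |]; auto).
    unfold lsum in *; simpl; lra.
Qed.

Lemma Sorted_Rge_app (l1 l2 : list R) :
  Sorted Rge (l1 ++ l2) -> forall a b, In a l1 -> In b l2 -> b <= a.
Proof.
  intros Hs; apply Sorted_StronglySorted in Hs; [| intros ? ? ?; lra].
  induction l1 as [| x l IH]; simpl; intros a b Ha Hb; [contradiction |].
  inversion Hs as [| ? ? Hl Hx]; subst.
  destruct Ha as [<- | Ha].
  - rewrite Forall_forall in Hx; apply Rge_le, Hx, in_or_app; auto.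
  - exact (IH Hl a b Ha Hb).
Qed.

Lemma lsum_firstn_average (s : list R) (m : nat) :
  Sorted Rge s -> (m <= length s)%nat ->
  INR m * lsum s <= INR (length s) * lsum (firstn m s).
Proof.
  intros Hs Hm.
  rewrite <- (firstn_skipn m s) in Hs.
  pose proof (lsum_dominated_average _ _ (Sorted_Rge_app _ _ Hs)) as Hdom.
  assert (Hlen : length s = (m + length (skipn m s))%nat)
    by (rewrite length_skipn; lia).
  rewrite (firstn_length_le _ Hm) in Hdom.
  rewrite Hlen, plus_INR, (lsum_firstn_skipn m s); nra.
Qed.

Lemma removal_count_le_length (s : list R) (A' : R) (j : nat) :
  0 <= A' -> removal_count s A' j -> (j <= length s)%nat.
Proof.
  intros HA' [_ Hbefore].
  destruct (le_lt_dec j (length s)) as [Hle | Hlt]; [exact Hle |].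
  specialize (Hbefore _ Hlt); rewrite skipn_all in Hbefore.
  unfold lsum in Hbefore; simpl in Hbefore; lra.
Qed.

Section RemovalBound.

Variables (eps A' : R) (s : list R).
Hypothesis eps_pos : 0 < eps.
Hypothesis A'_nonneg : 0 <= A'.
Hypothesis s_nonneg : Forall (fun y => 0 <= y) s.
Hypothesis s_sorted : Sorted Rge s.
Hypothesis s_total : lsum s < A' * (1 + eps).

Lemma removed_prefix_length_lt (m : nat) :
  lsum (skipn m s) > A' -> INR m < eps * INR (length s).
Proof.
  intros Hrest.
  assert (Hm : (m <= length s)%nat).
  { destruct (le_lt_dec m (length s)) as [Hle | Hlt]; [exact Hle |].
    rewrite skipn_all2 in Hrest by lia; unfold lsum in Hrest; simpl in Hrest; lra. }
  pose proof (lsum_firstn_average s m s_sorted Hm) as Havg.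
  pose proof (lsum_firstn_skipn m s) as Hsplit.
  assert (Hprefix : 0 <= lsum (firstn m s)).
  { apply lsum_nonneg; rewrite <- (firstn_skipn m s) in s_nonneg.
    apply Forall_app in s_nonneg; tauto. }
  (* the prefix weighs less than lsum s - A' < eps / (1 + eps) * lsum s *)
  assert (Hsmall : lsum (firstn m s) < eps * lsum s) by nra.
  assert (Hpos : 0 < lsum s) by lra.
  assert (Hn : 0 < INR (length s)).
  { destruct s; [unfold lsum in Hpos; simpl in Hpos; lra |].
    apply lt_0_INR; simpl; lia. }
  apply (Rmult_lt_reg_r (lsum s)); [exact Hpos |].
  apply (Rle_lt_trans _ _ _ Havg); nra.
Qed.

Lemma removal_count_lt (j : nat) :
  removal_count s A' j -> INR j < eps * INR (length s) + 1.
Proof.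
  intros [_ Hbefore]; destruct j as [| m].
  - simpl; pose proof (pos_INR (length s)); nra.
  - rewrite S_INR; pose proof (removed_prefix_length_lt m (Hbefore m (Nat.lt_succ_diag_r m))); lra.
Qed.

End RemovalBound.

Theorem lemma5 (eps A A' : R) (x s : list R) (j : nat) :
  0 < eps -> eps <= 1 -> 0 < A ->
  Forall (fun xi => 0 < xi) x ->
  lsum x <= A ->
  (Z.of_nat (length x) >= Rceil (1 / eps ^ 2))%Z ->
  largest_pow_below eps A A' ->
  Permutation x s -> nonincreasing s ->
  removal_count s A' j ->
  (1 - 2 * eps) * INR (length x) <= INR (length x - j).
Proof.
  intros Heps Heps1 _ Hpos Hsum Hceil HA' Hperm Hsorted Hj.
  pose proof (largest_pow_below_pos _ _ _ Heps HA') as HA'pos.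
  pose proof (largest_pow_below_gt _ _ _ Heps HA') as HA'gt.
  assert (Hlarge : 1 <= INR (length x) * eps ^ 2).
  { apply Z.ge_le, IZR_le in Hceil; rewrite <- INR_IZR_INZ in Hceil.
    pose proof (Rceil_ge (1 / eps ^ 2)).
    assert (Heps2 : 0 < eps ^ 2) by nra.
    apply (Rmult_le_reg_r (/ eps ^ 2)); [apply Rinv_0_lt_compat; lra |].
    field_simplify; lra. }
  assert (Hs_nonneg : Forall (fun y => 0 <= y) s).
  { apply (Permutation_Forall Hperm), (Forall_impl _ (fun y (Hy : 0 < y) => Rlt_le _ _ Hy) Hpos). }
  rewrite (lsum_Permutation _ _ Hperm) in Hsum.
  rewrite (Permutation_length Hperm) in *.
  pose proof (removal_count_lt eps A' s Heps (Rlt_le _ _ HA'pos) Hs_nonneg Hsorted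
                ltac:(lra) j Hj) as Hj_lt.
  rewrite minus_INR by exact (removal_count_le_length s A' j (Rlt_le _ _ HA'pos) Hj).
  nra.
Qed.
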